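(* Let $M=r^2\phi^{-2}\partial_r$ on the expanding region $\mathcal{R}^+$ of Schwarzschild–de Sitter. Then for every (sufficiently regular) function $\psi$, $K^M[\psi]\le0$ everywhere on $\mathcal{R}^+$.
   Context: Fix $\Lambda>0$, $0<3m<1/\sqrt\Lambda$; $D(r)=\frac{\Lambda}{3}r^2-1+\frac{2m}{r}$, $r_{\mathcal{C}}$ its largest positive root; $\mathcal{R}^+=(r_{\mathcal{C}},\infty)_r\times\mathbb{R}_t\times\mathbb{S}^2$ with $g=-D^{-1}dr^2+Ddt^2+r^2\gamma_{\mathbb{S}^2}$; $\phi=D^{-1/2}$. $T_{\mu\nu}[\psi]=\partial_\mu\psi\partial_\nu\psi-\frac12g_{\mu\nu}g^{\alpha\beta}\partial_\alpha\psi\partial_\beta\psi$; for a vector field $X$, ${}^{(X)}\pi^{\mu\nu}=\frac12(\nabla^\mu X^\nu+\nabla^\nu X^\mu)$ and $K^X[\psi]={}^{(X)}\pi^{\mu\nu}T_{\mu\nu}[\psi]$. *)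

From Stdlib Require Import Reals.
From Coquelicot Require Import Coquelicot.
Open Scope R_scope.

(* Coordinates on R^+ : x 0 = r, x 1 = t, x 2 = theta, x 3 = varphi
   (polar coordinates on S^2, gamma = dtheta^2 + sin^2 theta dvarphi^2).
   Points are functions nat -> R; only indices 0..3 are used. *)
Definition point := nat -> R.

Definition Dsds (Lam m r : R) : R := Lam / 3 * r ^ 2 - 1 + 2 * m / r.
Definition phi (Lam m r : R) : R := / sqrt (Dsds Lam m r).

Definition largest_pos_root (Lam m rC : R) : Prop :=
  0 < rC /\ Dsds Lam m rC = 0 /\ (forall r, rC < r -> Dsds Lam m r <> 0).

(* the chart of R^+ = (r_C, oo) x R x S^2 (sphere minus poles) *)
Definition inRplus (rC : R) (x : point) : Prop :=
  rC < x 0%nat /\ 0 < x 2%nat < PI.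

Definition upd (x : point) (mu : nat) (s : R) : point :=
  fun i => if Nat.eqb i mu then s else x i.

Definition pd (f : point -> R) (mu : nat) (x : point) : R :=
  Derive (fun s => f (upd x mu s)) (x mu).

Definition sum4 (f : nat -> R) : R := f 0%nat + f 1%nat + f 2%nat + f 3%nat.

Definition gSdS (Lam m : R) (x : point) (mu nu : nat) : R :=
  if Nat.eqb mu nu then
    match mu with
    | 0%nat => - / Dsds Lam m (x 0%nat)
    | 1%nat => Dsds Lam m (x 0%nat)
    | 2%nat => (x 0%nat) ^ 2
    | 3%nat => (x 0%nat) ^ 2 * (sin (x 2%nat)) ^ 2
    | _ => 0
    end
  else 0.

Definition gSdSinv (Lam m : R) (x : point) (mu nu : nat) : R :=
  if Nat.eqb mu nu then
    match mu with
    | 0%nat => - Dsds Lam m (x 0%nat)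
    | 1%nat => / Dsds Lam m (x 0%nat)
    | 2%nat => / (x 0%nat) ^ 2
    | 3%nat => / ((x 0%nat) ^ 2 * (sin (x 2%nat)) ^ 2)
    | _ => 0
    end
  else 0.

Definition Chr (g gi : point -> nat -> nat -> R) (x : point) (lam mu nu : nat) : R :=
  / 2 * sum4 (fun s => gi x lam s *
      (pd (fun y => g y s nu) mu x + pd (fun y => g y s mu) nu x
       - pd (fun y => g y mu nu) s x)).

Definition covD (g gi : point -> nat -> nat -> R) (X : point -> nat -> R)
  (x : point) (mu nu : nat) : R :=
  pd (fun y => X y nu) mu x + sum4 (fun a => Chr g gi x nu mu a * X x a).

Definition deform (g gi : point -> nat -> nat -> R) (X : point -> nat -> R)
  (x : point) (mu nu : nat) : R :=
  / 2 * (sum4 (fun a => gi x mu a * covD g gi X x a nu)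
         + sum4 (fun a => gi x nu a * covD g gi X x a mu)).

Definition Tem (g gi : point -> nat -> nat -> R) (psi : point -> R)
  (x : point) (mu nu : nat) : R :=
  pd psi mu x * pd psi nu x
  - / 2 * g x mu nu * sum4 (fun a => sum4 (fun b => gi x a b * pd psi a x * pd psi b x)).

Definition KX (g gi : point -> nat -> nat -> R) (X : point -> nat -> R)
  (psi : point -> R) (x : point) : R :=
  sum4 (fun mu => sum4 (fun nu => deform g gi X x mu nu * Tem g gi psi x mu nu)).

Definition Mfield (Lam m : R) (x : point) (mu : nat) : R :=
  if Nat.eqb mu 0 then (x 0%nat) ^ 2 * / (phi Lam m (x 0%nat)) ^ 2 else 0.

(* In the coordinates (r, t, theta, varphi) the metric is diagonal and depends
   only on r and theta, so the Christoffel symbols, hence nabla M for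
   M = r^2 D d_r, can be computed entry by entry.  The d_r psi terms of K^M cancel
   and one is left with
     K^M[psi] = - 2 r (d_t psi)^2
                - (D / r + D' / 2) ((d_theta psi)^2 + (d_varphi psi)^2 / sin^2 theta),
   where D / r + D' / 2 = (2 r D + r - 3 m) / r^2.  On R^+ this coefficient is
   positive since D > 0 there and r > r_C >= 1 / sqrt Lam > 3 m; the bound on r_C
   holds because the cubic r D(r) is negative at 1 / sqrt Lam but positive beyond r_C. *)

From Stdlib Require Import Reals Lra Psatz.
From Coquelicot Require Import Coquelicot.
Open Scope R_scope.

Definition sds_cubic (Lam m y : R) : R := Lam / 3 * y ^ 3 - y + 2 * m.

Lemma Dsds_cubic (Lam m y : R) : 0 < y -> Dsds Lam m y = sds_cubic Lam m y / y.
Proof. intros Hy. unfold Dsds, sds_cubic. field. lra. Qed.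

Section Largest_root.

Variables Lam m rC : R.
Hypothesis HLam : 0 < Lam.
Hypothesis Hm : 0 <= m.
Hypothesis HrC : largest_pos_root Lam m rC.

Lemma sds_cubic_pos_large (y : R) : 3 / Lam + 1 <= y -> 0 < sds_cubic Lam m y.
Proof.
  intros Hy.
  assert (H3 : 0 < 3 / Lam) by (apply Rdiv_lt_0_compat; lra).
  assert (Hsq : 1 < Lam / 3 * y ^ 2).
  { replace 1 with (Lam / 3 * (3 / Lam)) by (field; lra).
    apply Rmult_lt_compat_l; [lra | nra]. }
  unfold sds_cubic.
  replace (Lam / 3 * y ^ 3) with (Lam / 3 * y ^ 2 * y) by ring.
  nra.
Qed.

Lemma sds_cubic_pos_beyond_root (y : R) : rC < y -> 0 < sds_cubic Lam m y.
Proof.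
  intros Hy. destruct HrC as [HrC0 [_ Hno]].
  apply Rnot_le_lt. intros Hle.
  set (Y := y + 3 / Lam + 1).
  assert (H3 : 0 < 3 / Lam) by (apply Rdiv_lt_0_compat; lra).
  assert (HY : 0 < sds_cubic Lam m Y) by (apply sds_cubic_pos_large; unfold Y; lra).
  destruct (IVT_cor (sds_cubic Lam m) y Y) as [z [[Hz _] Hz0]].
  - unfold sds_cubic. reg.
  - unfold Y. lra.
  - nra.
  - apply (Hno z); [lra |]. rewrite Dsds_cubic, Hz0 by lra. field. lra.
Qed.

Lemma Dsds_pos_beyond_root (y : R) : rC < y -> 0 < Dsds Lam m y.
Proof.
  intros Hy.
  assert (HrC0 : 0 < rC) by apply HrC.
  rewrite Dsds_cubic by lra.
  apply Rdiv_lt_0_compat; [apply sds_cubic_pos_beyond_root |]; lra.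
Qed.

Lemma inv_sqrt_le_largest_root : 3 * m < / sqrt Lam -> / sqrt Lam <= rC.
Proof.
  intros Hm1.
  set (r0 := / sqrt Lam) in *.
  assert (Hr0 : 0 < r0) by (apply Rinv_0_lt_compat, sqrt_lt_R0; lra).
  assert (Hr0sq : Lam * r0 ^ 2 = 1).
  { unfold r0. rewrite pow_inv, <- Rsqr_pow2, Rsqr_sqrt by lra. field. lra. }
  assert (Hcubic : sds_cubic Lam m r0 < 0).
  { unfold sds_cubic. replace (Lam / 3 * r0 ^ 3) with (Lam * r0 ^ 2 * r0 / 3) by (field; lra).
    rewrite Hr0sq. lra. }
  apply Rnot_lt_le. intros Hlt.
  pose proof (sds_cubic_pos_beyond_root r0 Hlt). lra.
Qed.

End Largest_root.

Definition dDsds (Lam m r : R) : R := 2 * Lam / 3 * r - 2 * m / r ^ 2.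

Lemma ex_derive_Dsds (Lam m r : R) : r <> 0 -> ex_derive (fun s => Dsds Lam m s) r.
Proof. intros Hr. unfold Dsds. auto_derive. exact Hr. Qed.

Lemma Derive_Dsds (Lam m r : R) : r <> 0 -> Derive (fun s => Dsds Lam m s) r = dDsds Lam m r.
Proof.
  intros Hr. apply is_derive_unique. unfold Dsds, dDsds.
  auto_derive; [exact Hr | field; exact Hr].
Qed.

Definition dgSdS (Lam m : R) (x : point) (s nu mu : nat) : R :=
  if Nat.eqb s nu then
    match s, mu with
    | 0%nat, 0%nat => dDsds Lam m (x 0%nat) / Dsds Lam m (x 0%nat) ^ 2
    | 1%nat, 0%nat => dDsds Lam m (x 0%nat)
    | 2%nat, 0%nat => 2 * x 0%nat
    | 3%nat, 0%nat => 2 * x 0%nat * sin (x 2%nat) ^ 2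
    | 3%nat, 2%nat => x 0%nat ^ 2 * (2 * sin (x 2%nat) * cos (x 2%nat))
    | _, _ => 0
    end
  else 0.

Lemma pd_gSdS (Lam m : R) (x : point) (s nu mu : nat) :
  0 < x 0%nat -> 0 < Dsds Lam m (x 0%nat) ->
  pd (fun y => gSdS Lam m y s nu) mu x = dgSdS Lam m x s nu mu.
Proof.
  intros Hr HD. unfold pd. apply is_derive_unique.
  unfold gSdS, dgSdS. destruct (Nat.eqb s nu); [| now auto_derive].
  destruct s as [|[|[|[|s]]]], mu as [|[|[|[|mu]]]]; unfold upd; cbn [Nat.eqb];
    auto_derive; rewrite ?Derive_Dsds by lra;
    repeat split; try (apply ex_derive_Dsds; lra); try lra; field; lra.
Qed.

Lemma inv_phi_sq (Lam m r : R) : 0 < Dsds Lam m r -> / phi Lam m r ^ 2 = Dsds Lam m r.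
Proof.
  intros HD. unfold phi. rewrite pow_inv, Rinv_inv, <- Rsqr_pow2, Rsqr_sqrt by lra.
  reflexivity.
Qed.

Section Positive_D.

Variables Lam m rC : R.
Hypothesis HrC : 0 <= rC.
Hypothesis HD_pos : forall r, rC < r -> 0 < Dsds Lam m r.

Lemma Mfield_radial (x : point) : rC < x 0%nat ->
  Mfield Lam m x 0 = x 0%nat ^ 2 * Dsds Lam m (x 0%nat).
Proof. intros Hx. unfold Mfield. cbn [Nat.eqb]. rewrite inv_phi_sq; auto. Qed.

Lemma pd_Mfield (x : point) (nu mu : nat) : rC < x 0%nat ->
  pd (fun y => Mfield Lam m y nu) mu x =
  if (Nat.eqb nu 0 && Nat.eqb mu 0)%bool
  then 2 * x 0%nat * Dsds Lam m (x 0%nat) + x 0%nat ^ 2 * dDsds Lam m (x 0%nat)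
  else 0.
Proof.
  intros Hx. unfold pd. apply is_derive_unique.
  destruct nu as [|nu]; [| unfold Mfield; cbn [Nat.eqb andb]; now auto_derive].
  destruct mu as [|mu]; cbn [Nat.eqb andb].
  2: { apply (is_derive_ext (fun _ => Mfield Lam m x 0)); [reflexivity | now auto_derive]. }
  apply (is_derive_ext_loc (fun r => r ^ 2 * Dsds Lam m r)).
  - assert (Hdist : 0 < x 0%nat - rC) by lra.
    exists (mkposreal _ Hdist). intros r Hr.
    apply Rabs_lt_between' in Hr. symmetry. apply Mfield_radial. unfold upd. simpl in *. lra.
  - unfold upd. cbn [Nat.eqb].
    auto_derive; [apply ex_derive_Dsds; lra |].
    rewrite Derive_Dsds by lra. ring.
Qed.

Definition nablaM (x : point) (mu nu : nat) : R :=
  let r := x 0%nat in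
  if Nat.eqb mu nu then
    match mu with
    | 0%nat => 2 * r * Dsds Lam m r + r ^ 2 * dDsds Lam m r / 2
    | 1%nat => r ^ 2 * dDsds Lam m r / 2
    | 2%nat | 3%nat => r * Dsds Lam m r
    | _ => 0
    end
  else 0.

Lemma covD_Mfield (x : point) (mu nu : nat) :
  rC < x 0%nat -> 0 < sin (x 2%nat) -> (mu < 4)%nat -> (nu < 4)%nat ->
  covD (gSdS Lam m) (gSdSinv Lam m) (Mfield Lam m) x mu nu = nablaM x mu nu.
Proof.
  intros Hx Hsin Hmu Hnu.
  assert (HD : 0 < Dsds Lam m (x 0%nat)) by auto.
  unfold covD, Chr, sum4.
  rewrite !pd_gSdS, !pd_Mfield, !Mfield_radial by lra.
  destruct mu as [|[|[|[|mu]]]]; [| | | | lia];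
  destruct nu as [|[|[|[|nu]]]]; try lia;
  unfold nablaM, dgSdS, gSdSinv, Mfield; cbn [Nat.eqb andb]; field; lra.
Qed.

Lemma KX_Mfield (psi : point -> R) (x : point) :
  rC < x 0%nat -> 0 < sin (x 2%nat) ->
  KX (gSdS Lam m) (gSdSinv Lam m) (Mfield Lam m) psi x =
  - 2 * x 0%nat * pd psi 1 x ^ 2
  - (Dsds Lam m (x 0%nat) / x 0%nat + dDsds Lam m (x 0%nat) / 2) *
    (pd psi 2 x ^ 2 + pd psi 3 x ^ 2 / sin (x 2%nat) ^ 2).
Proof.
  intros Hx Hsin.
  assert (HD : 0 < Dsds Lam m (x 0%nat)) by auto.
  unfold KX, deform, Tem, sum4.
  rewrite !covD_Mfield by (auto; lia).
  unfold nablaM, gSdSinv, gSdS; cbn [Nat.eqb].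
  field. lra.
Qed.

End Positive_D.

Lemma Dsds_div_add_half_deriv_pos (Lam m r : R) :
  0 < r -> 3 * m < r -> 0 < Dsds Lam m r -> 0 < Dsds Lam m r / r + dDsds Lam m r / 2.
Proof.
  intros Hr Hrm HD.
  replace (Dsds Lam m r / r + dDsds Lam m r / 2)
    with ((2 * r * Dsds Lam m r + r - 3 * m) / r ^ 2) by (unfold Dsds, dDsds; field; lra).
  apply Rdiv_lt_0_compat; nra.
Qed.

Theorem proposition3p4 (Lam m rC : R)
  (HLam : 0 < Lam) (Hm0 : 0 < 3 * m) (Hm1 : 3 * m < / sqrt Lam)
  (HrC : largest_pos_root Lam m rC)
  (psi : point -> R)
  (Hpsi : forall (x : point) (mu : nat), inRplus rC x -> (mu < 4)%nat ->
            ex_derive (fun s => psi (upd x mu s)) (x mu)) :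
  forall x : point, inRplus rC x ->
    KX (gSdS Lam m) (gSdSinv Lam m) (Mfield Lam m) psi x <= 0.
Proof.
  intros x [Hx Htheta].
  assert (Hm : 0 <= m) by lra.
  assert (HrC0 : 0 < rC) by apply HrC.
  pose proof (Dsds_pos_beyond_root Lam m rC HLam Hm HrC) as HD_pos.
  assert (Hsin : 0 < sin (x 2%nat)) by (apply sin_gt_0; lra).
  pose proof (inv_sqrt_le_largest_root Lam m rC HLam Hm HrC Hm1) as HrC_large.
  rewrite (KX_Mfield Lam m rC) by (auto; lra).
  assert (Hcoef : 0 < Dsds Lam m (x 0%nat) / x 0%nat + dDsds Lam m (x 0%nat) / 2)
    by (apply Dsds_div_add_half_deriv_pos; auto; lra).
  assert (Hangular : 0 <= pd psi 2 x ^ 2 + pd psi 3 x ^ 2 / sin (x 2%nat) ^ 2).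
  { apply Rplus_le_le_0_compat; [nra |].
    apply Rdiv_le_0_compat; nra. }
  nra.
Qed.
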